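(* Let $\Sigma$ be a simplicial complex which is oriented with respect to a partial order $\le$ on its vertex set $\Sigma^0$, let $Y$ be a topological space, and let $\Phi,\Psi:\Sigma^0\rightrightarrows Y$ be mappings (to nonempty subsets of $Y$) such that for every $v\in\Sigma^0$, $\Phi(v)\subset\Psi(v)$ and $\Phi(v)$ is contractible in $\Psi(v)$, and such that $\Psi(v)\subset\Phi(u)$ whenever $u,v\in\Sigma^0$ with $u<v$. Then there exists a continuous map $h:|\Sigma|\to Y$ such that $h(|\sigma|)\subset\Psi(\min\sigma)$ for every $\sigma\in\Sigma$.
   Context: A simplicial complex is a collection $\Sigma$ of nonempty finite subsets of a set such that $\tau\in\Sigma$ whenever $\emptyset\ne\tau\subset\sigma\in\Sigma$; its vertex set $\Sigma^0$ is $\bigcup\Sigma$. Its geometric realisation $|\Sigma|$ is obtained by embedding $\Sigma^0$ as a linearly independent subset of a linear space, letting $|\sigma|$ be the convex hull of $\sigma$ and $|\Sigma|=\bigcup_{\sigma\in\Sigma}|\sigma|$, with the Whitehead topology: $U\subset|\Sigma|$ is open iff $U\cap|\sigma|$ is open in $|\sigma|$ for every $\sigma\in\Sigma$. $\Sigma$ is oriented with respect to a partial order $\le$ on $\Sigma^0$ if each simplex is linearly ordered by $\le$; then $\min\sigma$ denotes the least vertex of $\sigma$. A subset $S\subset T$ is contractible in $T$ if there is a homotopy $H:S\times[0,1]\to T$ with $H(y,0)=y$ and $H(y,1)=p$ for all $y\in S$, for some point $p\in T$. *)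

From Stdlib Require Import Reals List.
Open Scope R_scope.

Record Topology (X : Type) := {
  open : (X -> Prop) -> Prop;
  open_ext : forall U U', (forall x, U x <-> U' x) -> open U -> open U';
  open_full : open (fun _ => True);
  open_inter : forall U W, open U -> open W -> open (fun x => U x /\ W x);
  open_union : forall F : (X -> Prop) -> Prop,
      (forall U, F U -> open U) -> open (fun x => exists U, F U /\ U x)
}.
Arguments open {X} t U.

Definition finite_set {V : Type} (s : V -> Prop) : Prop :=
  exists l : list V, NoDup l /\ forall v, s v <-> In v l.

Definition simplicial_complex {V : Type} (Sig : (V -> Prop) -> Prop) : Prop :=
  (forall s, Sig s -> finite_set s /\ exists v, s v) /\
  (forall s t, Sig s -> (exists v, t v) -> (forall v, t v -> s v) -> Sig t).

Definition vertex {V : Type} (Sig : (V -> Prop) -> Prop) (v : V) : Prop :=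
  exists s, Sig s /\ s v.

Definition oriented {V : Type} (Sig : (V -> Prop) -> Prop) (le : V -> V -> Prop) : Prop :=
  (forall v, vertex Sig v -> le v v) /\
  (forall u v, vertex Sig u -> vertex Sig v -> le u v -> le v u -> u = v) /\
  (forall u v w, vertex Sig u -> vertex Sig v -> vertex Sig w ->
                 le u v -> le v w -> le u w) /\
  (forall s, Sig s -> forall u v, s u -> s v -> le u v \/ le v u).

Definition is_min {V : Type} (le : V -> V -> Prop) (s : V -> Prop) (m : V) : Prop :=
  s m /\ forall v, s v -> le m v.

(** Geometric realisation: V is embedded as the standard basis of the space of
    finitely supported functions V -> R; |s| is the convex hull of s, i.e. the
    barycentric coordinate functions supported in s, nonnegative, summing to 1. *)
Definition in_simplex {V : Type} (s : V -> Prop) (a : V -> R) : Prop :=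
  (forall v, 0 <= a v) /\ (forall v, ~ s v -> a v = 0) /\
  exists l : list V, NoDup l /\ (forall v, s v <-> In v l) /\
                     fold_right Rplus 0 (map a l) = 1.

Definition is_point {V : Type} (Sig : (V -> Prop) -> Prop) (a : V -> R) : Prop :=
  exists s, Sig s /\ in_simplex s a.

Definition realisation {V : Type} (Sig : (V -> Prop) -> Prop) : Type :=
  { a : V -> R | is_point Sig a }.

(** Whitehead topology: P is open iff P ∩ |s| is open in |s| (Euclidean
    topology of the finite-dimensional simplex, via the sup norm on the
    coordinates in s) for every simplex s. *)
Definition whitehead_open {V : Type} (Sig : (V -> Prop) -> Prop)
  (P : realisation Sig -> Prop) : Prop :=
  forall s, Sig s -> forall a : realisation Sig, in_simplex s (proj1_sig a) -> P a ->
    exists eps, 0 < eps /\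
      forall b : realisation Sig, in_simplex s (proj1_sig b) ->
        (forall v, s v -> Rabs (proj1_sig b v - proj1_sig a v) < eps) -> P b.

Definition continuous_real {V Y : Type} (Sig : (V -> Prop) -> Prop) (TY : Topology Y)
  (h : realisation Sig -> Y) : Prop :=
  forall U, open TY U -> whitehead_open Sig (fun a => U (h a)).

(** S is contractible in T (both subsets of Y): a homotopy H : S x [0,1] -> T,
    continuous for the product of the subspace topology on S and the usual
    topology on [0,1] (T carrying the subspace topology of Y), with
    H(y,0) = y and H(y,1) = p for a fixed p in T. *)
Definition contractible_in {Y : Type} (TY : Topology Y) (S T : Y -> Prop) : Prop :=
  exists (H : Y -> R -> Y) (p : Y),
    T p /\
    (forall y t, S y -> 0 <= t <= 1 -> T (H y t)) /\
    (forall y, S y -> H y 0 = y) /\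
    (forall y, S y -> H y 1 = p) /\
    (forall U, open TY U ->
       forall y t, S y -> 0 <= t <= 1 -> U (H y t) ->
         exists W eps, open TY W /\ W y /\ 0 < eps /\
           forall y' t', S y' -> W y' -> 0 <= t' <= 1 -> Rabs (t' - t) < eps ->
             U (H y' t')).

(* A point a of |Sigma| is sent, by recursion on the number of its nonzero
   barycentric coordinates, to
     h(a) = p_v                            if a_v >= 1/2,
     h(a) = H_v (h(a'), 2 a_v)             otherwise,
   where v is the least vertex of the support of a, H_v is a contraction of
   Phi(v) in Psi(v) to the point p_v, and a' is the radial projection of a
   from v onto the opposite face.  By induction, h(a') lies in Psi of the
   least vertex of the support of a', which is > v, hence in Phi(v), so H_v
   may be applied; the result lies in Psi(v).  Since H_v(y, 0) = y, the same
   formula holds with v the least vertex of any simplex carrying a, which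
   gives continuity on each closed simplex by induction on its dimension. *)

From Stdlib Require Import Reals List Lra Lia Classical ClassicalEpsilon
  FunctionalExtensionality Permutation.
Open Scope R_scope.

Lemma choice_on {A B : Type} (P : A -> Prop) (Q : A -> B -> Prop) :
  inhabited B -> (forall x, P x -> exists y, Q x y) ->
  exists f : A -> B, forall x, P x -> Q x (f x).
Proof.
  intros HB HQ. exists (fun x => epsilon HB (Q x)).
  intros x Hx. apply epsilon_spec; auto.
Qed.

Lemma exists_min_in_list {A : Type} (R : A -> A -> Prop) (P : A -> Prop) (l : list A) :
  (forall x y z, In x l -> In y l -> In z l -> R x y -> R y z -> R x z) ->
  (forall x y, In x l -> In y l -> R x y \/ R y x) ->
  (exists x, In x l /\ P x) -> exists m, is_min R (fun x => In x l /\ P x) m.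
Proof.
  induction l as [|h t IH]; intros Htrans Htot [x [Hx Px]]; [destruct Hx|].
  assert (Hrefl : forall z, In z (h :: t) -> R z z)
    by (intros z Hz; destruct (Htot z z Hz Hz); auto).
  destruct (classic (exists z, In z t /\ P z)) as [Ht|Ht].
  - destruct IH as [m [[Hm Pm] Hmin]];
      [intros ? ? ? ? ? ?; apply Htrans; simpl; auto
      |intros ? ? ? ?; apply Htot; simpl; auto|exact Ht|].
    destruct (classic (P h /\ R h m)) as [[Ph Rhm]|Hhm].
    + exists h; split; [simpl; auto|]. intros z [[Hz|Hz] Pz]; [subst z; apply Hrefl; simpl; auto|].
      apply Htrans with m; simpl; auto.
    + exists m; split; [simpl; auto|]. intros z [[Hz|Hz] Pz]; [subst z|auto].
      destruct (Htot h m) as [Rhm|]; simpl; auto. tauto.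
  - assert (Ph : P h) by (destruct Hx as [<-|Hx]; [auto|exfalso; eauto]).
    exists h; split; [simpl; auto|]. intros z [[Hz|Hz] Pz]; [subst z; apply Hrefl; simpl; auto|].
    exfalso; eauto.
Qed.

Definition sumR {A : Type} (l : list A) (f : A -> R) : R := fold_right Rplus 0 (map f l).

Lemma sumR_cons {A : Type} (x : A) l f : sumR (x :: l) f = f x + sumR l f.
Proof. reflexivity. Qed.

Lemma sumR_perm {A : Type} (l l' : list A) f : Permutation l l' -> sumR l f = sumR l' f.
Proof. unfold sumR; induction 1; simpl; lra. Qed.

Lemma sumR_ext {A : Type} (l : list A) f g :
  (forall x, In x l -> f x = g x) -> sumR l f = sumR l g.
Proof. intros Hfg; unfold sumR; f_equal; apply map_ext_in; auto. Qed.

Lemma sumR_div {A : Type} (l : list A) f c : sumR l (fun x => f x / c) = sumR l f / c.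
Proof. induction l as [|x l IH]; rewrite ?sumR_cons, ?IH; unfold sumR; simpl; lra. Qed.

Lemma sumR_nonneg {A : Type} (l : list A) f : (forall x, 0 <= f x) -> 0 <= sumR l f.
Proof.
  intros Hf; induction l as [|x l IH]; rewrite ?sumR_cons; [unfold sumR; simpl; lra|].
  specialize (Hf x); lra.
Qed.

Lemma sumR_pos_term {A : Type} (l : list A) f :
  (forall x, 0 <= f x) -> 0 < sumR l f -> exists x, In x l /\ 0 < f x.
Proof.
  intros Hf; induction l as [|x l IH]; intros Hs; [unfold sumR in Hs; simpl in Hs; lra|].
  rewrite sumR_cons in Hs. destruct (Rlt_dec 0 (f x)) as [Hx|Hx]; [exists x; simpl; auto|].
  destruct IH as [y [Hy Hfy]]; [specialize (Hf x); lra|]. exists y; simpl; auto.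
Qed.

Lemma sumR_term_le {A : Type} (l : list A) f x :
  (forall y, 0 <= f y) -> In x l -> f x <= sumR l f.
Proof.
  intros Hf; induction l as [|y l IH]; intros Hx; [destruct Hx|rewrite sumR_cons].
  destruct Hx as [<-|Hx].
  - pose proof (sumR_nonneg l f Hf); lra.
  - specialize (Hf y); specialize (IH Hx); lra.
Qed.

Lemma Rabs_div_compl_sub_lt x x' p q d :
  Rabs (x - x') < d -> Rabs (p - q) < d -> 0 <= x' <= 1 ->
  0 <= p < 1/2 -> 0 <= q <= 1/2 -> Rabs (x / (1 - p) - x' / (1 - q)) < 8 * d.
Proof.
  intros Hx Hpq Hx' Hp Hq.
  replace (x / (1 - p) - x' / (1 - q))
    with (((x - x') * (1 - q) + x' * (p - q)) * / ((1 - p) * (1 - q))) by (field; lra).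
  rewrite Rabs_mult, Rabs_inv, (Rabs_right ((1 - p) * (1 - q))) by nra.
  assert (Hnum : Rabs ((x - x') * (1 - q) + x' * (p - q)) < 2 * d).
  { eapply Rle_lt_trans; [apply Rabs_triang|].
    rewrite !Rabs_mult, (Rabs_right (1 - q)), (Rabs_right x') by lra.
    pose proof (Rabs_pos (x - x')); pose proof (Rabs_pos (p - q)); nra. }
  assert (Hinv : 0 < / ((1 - p) * (1 - q)) <= 4).
  { split; [apply Rinv_0_lt_compat; nra|].
    replace 4 with (/ (1/4)) by field. apply Rinv_le_contravar; nra. }
  pose proof (Rabs_pos ((x - x') * (1 - q) + x' * (p - q))); nra.
Qed.

Definition contraction {Y : Type} (TY : Topology Y) (S T : Y -> Prop)
  (H : Y -> R -> Y) (p : Y) : Prop :=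
  T p /\
  (forall y t, S y -> 0 <= t <= 1 -> T (H y t)) /\
  (forall y, S y -> H y 0 = y) /\
  (forall y, S y -> H y 1 = p) /\
  (forall U, open TY U ->
     forall y t, S y -> 0 <= t <= 1 -> U (H y t) ->
       exists W eps, open TY W /\ W y /\ 0 < eps /\
         forall y' t', S y' -> W y' -> 0 <= t' <= 1 -> Rabs (t' - t) < eps ->
           U (H y' t')).

Definition enumerates {V : Type} (s : V -> Prop) (l : list V) : Prop :=
  NoDup l /\ forall v, s v <-> In v l.

Definition face {V : Type} (s : V -> Prop) (v : V) : V -> Prop := fun w => s w /\ w <> v.

Definition support {V : Type} (a : V -> R) : V -> Prop := fun w => 0 < a w.

(* The radial projection of a from the vertex v onto the opposite face;
   it is meaningful only for a v < 1. *)
Definition face_proj {V : Type} (a : V -> R) (v : V) : V -> R :=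
  fun w => if excluded_middle_informative (w = v) then 0 else a w / (1 - a v).

Definition fin_card {V : Type} (s : V -> Prop) : nat :=
  match excluded_middle_informative (exists l, enumerates s l) with
  | left e => length (proj1_sig (constructive_indefinite_description _ e))
  | right _ => O
  end.

Section Simplices.
Context {V : Type}.
Implicit Types (s : V -> Prop) (a b : V -> R) (l : list V) (v w : V).

Lemma enumerates_ext s s' l : (forall v, s v <-> s' v) -> enumerates s l -> enumerates s' l.
Proof. intros Hss' [Hnd Hl]; split; auto. intro v; rewrite <- Hss'; auto. Qed.

Lemma fin_card_eq s l : enumerates s l -> fin_card s = length l.
Proof.
  intros [Hnd Hl]. unfold fin_card. destruct excluded_middle_informative as [e|n].
  - destruct constructive_indefinite_description as [l' [Hnd' Hl']]; simpl.
    apply Permutation_length, NoDup_Permutation; auto.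
    intro x; rewrite <- Hl, <- Hl'; tauto.
  - exfalso; apply n; exists l; split; auto.
Qed.

Lemma enumerates_face s l v : enumerates s l -> s v ->
  exists l', enumerates (face s v) l' /\ Permutation l (v :: l').
Proof.
  intros [Hnd Hl] Hv. destruct (in_split v l) as [l1 [l2 ->]]; [apply Hl; auto|].
  exists (l1 ++ l2). split; [split|].
  - exact (NoDup_remove_1 _ _ _ Hnd).
  - intro w; unfold face; rewrite Hl, !in_app_iff; simpl. split.
    + intros [[Hw|[<-|Hw]] Hwv]; tauto.
    + intros Hw; split; [tauto|]. intros ->. apply (NoDup_remove_2 _ _ _ Hnd).
      apply in_app_iff; auto.
  - symmetry; apply Permutation_middle.
Qed.

Lemma in_simplex_intro s a l :
  (forall v, 0 <= a v) -> (forall v, ~ s v -> a v = 0) -> enumerates s l -> sumR l a = 1 ->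
  in_simplex s a.
Proof. intros Hnn Hz [Hnd Hl] Hsum; split; [|split]; auto; exists l; auto. Qed.

Lemma in_simplex_enumerates s a : in_simplex s a -> exists l, enumerates s l.
Proof. intros (_ & _ & l & Hnd & Hl & _); exists l; split; auto. Qed.

Lemma in_simplex_sum s a l : in_simplex s a -> enumerates s l -> sumR l a = 1.
Proof.
  intros (_ & _ & l' & Hnd' & Hl' & Hsum) [Hnd Hl]. rewrite (sumR_perm l l'); auto.
  apply NoDup_Permutation; auto. intro x; rewrite <- Hl, Hl'; tauto.
Qed.

Lemma support_sub s a w : in_simplex s a -> support a w -> s w.
Proof.
  intros (_ & Hz & _) Hw. apply NNPP; intro Hs.
  unfold support in Hw; rewrite Hz in Hw; auto; lra.
Qed.

Lemma support_nonempty s a : in_simplex s a -> exists w, support a w.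
Proof.
  intros Ha. destruct (in_simplex_enumerates s a Ha) as [l Hl].
  destruct (sumR_pos_term l a) as [w [_ Hw]]; [apply Ha|rewrite (in_simplex_sum s a l); auto; lra|].
  exists w; auto.
Qed.

Lemma support_enumerates s a : in_simplex s a -> exists l, enumerates (support a) l.
Proof.
  intros Ha. destruct (in_simplex_enumerates s a Ha) as [l [Hnd Hl]].
  exists (filter (fun w => if Rlt_dec 0 (a w) then true else false) l).
  split; [apply NoDup_filter; auto|]. intro w; rewrite filter_In, <- Hl.
  destruct (Rlt_dec 0 (a w)); unfold support; split; intuition (try discriminate).
  eapply support_sub; eauto.
Qed.

Lemma coord_le_1 s a w : in_simplex s a -> a w <= 1.
Proof.
  intros Ha. destruct (classic (s w)) as [Hw|Hw]; [|rewrite (proj1 (proj2 Ha) w Hw); lra].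
  destruct (in_simplex_enumerates s a Ha) as [l Hl].
  rewrite <- (in_simplex_sum s a l Ha Hl). apply sumR_term_le; [apply Ha|apply Hl; auto].
Qed.

Lemma face_proj_at a v : face_proj a v v = 0.
Proof. unfold face_proj; destruct excluded_middle_informative; congruence. Qed.

Lemma face_proj_off a v w : w <> v -> face_proj a v w = a w / (1 - a v).
Proof. unfold face_proj; destruct excluded_middle_informative; congruence. Qed.

Lemma face_proj_eq_self a v : a v = 0 -> face_proj a v = a.
Proof.
  intros Hav; apply functional_extensionality; intro w.
  destruct (classic (w = v)) as [->|Hwv]; [rewrite face_proj_at; auto|].
  rewrite face_proj_off, Hav by auto; field.
Qed.

Lemma support_face_proj a v w :
  a v < 1 -> support (face_proj a v) w <-> face (support a) v w.
Proof.
  intros Hav; unfold support, face.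
  destruct (classic (w = v)) as [->|Hwv]; [rewrite face_proj_at; intuition lra|].
  rewrite face_proj_off by auto. split; [intros Hw; split; auto|intros [Hw _]].
  - replace (a w) with (a w / (1 - a v) * (1 - a v)) by (field; lra).
    apply Rmult_lt_0_compat; lra.
  - apply Rdiv_lt_0_compat; lra.
Qed.

Lemma face_proj_in_simplex s a v : in_simplex s a -> s v -> a v < 1 ->
  in_simplex s (face_proj a v).
Proof.
  intros Ha Hv Hav. destruct (in_simplex_enumerates s a Ha) as [l Hl].
  destruct (enumerates_face s l v Hl Hv) as [l' [Hl' Hperm]].
  apply in_simplex_intro with l; auto.
  - intro w. destruct (classic (w = v)) as [->|Hwv]; [rewrite face_proj_at; lra|].
    rewrite face_proj_off by auto. pose proof (proj1 Ha w).
    apply Rmult_le_pos; [lra|apply Rlt_le, Rinv_0_lt_compat; lra].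
  - intros w Hw. destruct (classic (w = v)) as [->|Hwv]; [apply face_proj_at|].
    rewrite face_proj_off, (proj1 (proj2 Ha) w Hw) by auto; field; lra.
  - assert (Hsum := in_simplex_sum s a l Ha Hl).
    rewrite (sumR_perm _ _ _ Hperm), sumR_cons in Hsum.
    rewrite (sumR_perm _ _ _ Hperm), sumR_cons, face_proj_at.
    rewrite (sumR_ext l' _ (fun w => a w / (1 - a v))), sumR_div.
    + replace (sumR l' a) with (1 - a v) by lra. field; lra.
    + intros w Hw. apply face_proj_off, (proj2 Hl' w); auto.
Qed.

Lemma in_simplex_face s a v : in_simplex s a -> s v -> a v = 0 -> in_simplex (face s v) a.
Proof.
  intros Ha Hv Hav. destruct (in_simplex_enumerates s a Ha) as [l Hl].
  destruct (enumerates_face s l v Hl Hv) as [l' [Hl' Hperm]].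
  apply in_simplex_intro with l'; auto; [apply Ha| |].
  - intros w Hw. destruct (classic (w = v)) as [->|Hwv]; auto.
    apply (proj1 (proj2 Ha)); intro; apply Hw; split; auto.
  - assert (Hsum := in_simplex_sum s a l Ha Hl).
    rewrite (sumR_perm _ _ _ Hperm), sumR_cons, Hav in Hsum; lra.
Qed.

Lemma face_proj_close s a b v d :
  in_simplex s a -> in_simplex s b -> a v <= 1/2 -> b v < 1/2 ->
  (forall w, s w -> Rabs (b w - a w) < d) -> s v ->
  forall w, face s v w -> Rabs (face_proj b v w - face_proj a v w) < 8 * d.
Proof.
  intros Ha Hb Hav Hbv Hd Hv w [Hw Hwv]. rewrite !face_proj_off by auto.
  pose proof (proj1 Ha v); pose proof (proj1 Hb v); pose proof (proj1 Ha w).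
  apply Rabs_div_compl_sub_lt; auto; try lra. split; auto. apply (coord_le_1 s); auto.
Qed.

End Simplices.

Section Construction.
Context {V Y : Type}.
Variables (Sig : (V -> Prop) -> Prop) (le : V -> V -> Prop).
Variables (TY : Topology Y) (Phi Psi : V -> Y -> Prop).
Variables (H : V -> Y -> R -> Y) (p : V -> Y) (y0 : Y).
Hypothesis HSC : simplicial_complex Sig.
Hypothesis HOR : oriented Sig le.
Hypothesis Hcontr : forall v, vertex Sig v -> contraction TY (Phi v) (Psi v) (H v) (p v).
Hypothesis Hlt : forall u v, vertex Sig u -> vertex Sig v -> le u v -> u <> v ->
  forall y, Psi v y -> Phi u y.
Implicit Types (s : V -> Prop) (a b : V -> R) (v w : V).

Lemma vertex_of s v : Sig s -> s v -> vertex Sig v.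
Proof. intros; exists s; auto. Qed.

Lemma exists_min s (P : V -> Prop) :
  Sig s -> (forall w, P w -> s w) -> (exists w, P w) -> exists m, is_min le P m.
Proof.
  intros Hs HPs [w Hw]. destruct HOR as (_ & _ & Htrans & Htot).
  destruct (proj1 (proj1 HSC s Hs)) as [l [_ Hl]].
  destruct (exists_min_in_list le P l) as [m [[_ Hm] Hmin]].
  - intros x y z Hx Hy Hz.
    apply Htrans; eapply vertex_of; eauto; apply Hl; auto.
  - intros x y Hx Hy; apply (Htot s Hs); apply Hl; auto.
  - exists w; split; auto; apply Hl, HPs, Hw.
  - exists m; split; auto. intros v Hv; apply Hmin; split; auto; apply Hl, HPs, Hv.
Qed.

Lemma exists_min_vertex s : Sig s -> exists m, is_min le s m.
Proof. intros Hs. apply exists_min with s; auto. apply (proj1 HSC s Hs). Qed.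

Lemma exists_least_support s a : Sig s -> in_simplex s a -> exists v, is_min le (support a) v.
Proof.
  intros Hs Ha. apply exists_min with s; auto.
  - intros w; apply support_sub; auto.
  - apply support_nonempty with s; auto.
Qed.

Lemma face_proj_in_face s a v : Sig s -> in_simplex s a -> s v -> a v < 1 ->
  Sig (face s v) /\ in_simplex (face s v) (face_proj a v).
Proof.
  intros Hs Ha Hv Hav.
  assert (Hf : in_simplex (face s v) (face_proj a v)).
  { apply in_simplex_face; auto; [apply face_proj_in_simplex; auto|apply face_proj_at]. }
  split; auto. apply (proj2 HSC) with s; auto; [|intros w []; auto].
  destruct (support_nonempty _ _ Hf) as [w Hw]. exists w; eapply support_sub; eauto.
Qed.

Lemma face_ind (P : (V -> Prop) -> Prop) :
  (forall s, Sig s -> (forall v, s v -> Sig (face s v) -> P (face s v)) -> P s) ->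
  forall s, Sig s -> P s.
Proof.
  intros IH.
  enough (Hn : forall n s l, Sig s -> enumerates s l -> (length l <= n)%nat -> P s).
  { intros s Hs. destruct (proj1 (proj1 HSC s Hs)) as [l Hl]. exact (Hn _ s l Hs Hl (le_n _)). }
  induction n as [|n IHn]; intros s l Hs Hl Hlen.
  - destruct (proj2 (proj1 HSC s Hs)) as [v Hv].
    destruct l; [|simpl in Hlen; lia]. exact (False_ind _ (proj1 (proj2 Hl v) Hv)).
  - apply IH; auto. intros v Hv Hsv. destruct (enumerates_face s l v Hl Hv) as [l' [Hl' Hperm]].
    apply (IHn _ l' Hsv Hl'). apply Permutation_length in Hperm. simpl in Hperm. lia.
Qed.

Definition least_support a : option V :=
  match excluded_middle_informative (exists v, is_min le (support a) v) with
  | left e => Some (proj1_sig (constructive_indefinite_description _ e))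
  | right _ => None
  end.

Lemma least_support_eq s a v : Sig s -> in_simplex s a -> is_min le (support a) v ->
  least_support a = Some v.
Proof.
  intros Hs Ha Hv. unfold least_support. destruct excluded_middle_informative as [e|n].
  - destruct constructive_indefinite_description as [u [Hu Humin]]; simpl. f_equal.
    destruct Hv as [Hv Hvmin].
    assert (Hvert : forall w, support a w -> vertex Sig w)
      by (intros w Hw; apply vertex_of with s; auto; eapply support_sub; eauto).
    apply (proj1 (proj2 HOR)); auto.
  - exfalso; eauto.
Qed.

(* The fuel is the number of nonzero coordinates; each recursive call removes one. *)
Fixpoint hmap_fuel (n : nat) a : Y :=
  match n, least_support a with
  | S n, Some v =>
      if Rle_dec (1/2) (a v) then p v else H v (hmap_fuel n (face_proj a v)) (2 * a v)
  | _, _ => y0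
  end.

Definition hmap a : Y := hmap_fuel (fin_card (support a)) a.

Lemma hmap_step s a v : Sig s -> in_simplex s a -> is_min le (support a) v ->
  hmap a = if Rle_dec (1/2) (a v) then p v else H v (hmap (face_proj a v)) (2 * a v).
Proof.
  intros Hs Ha Hv. unfold hmap at 1.
  destruct (support_enumerates s a Ha) as [ls Hls].
  destruct (enumerates_face _ ls v Hls (proj1 Hv)) as [l' [Hl' Hperm]].
  rewrite (fin_card_eq _ ls Hls), (Permutation_length Hperm). simpl.
  rewrite (least_support_eq s a v Hs Ha Hv).
  destruct (Rle_dec (1/2) (a v)); [reflexivity|].
  unfold hmap. rewrite (fin_card_eq _ l'); [reflexivity|].
  apply enumerates_ext with (face (support a) v); [|exact Hl'].
  intro w; symmetry; apply support_face_proj; lra.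
Qed.

Lemma Phi_sub_Psi v y : vertex Sig v -> Phi v y -> Psi v y.
Proof.
  intros Hv Hy. destruct (Hcontr v Hv) as (_ & Hin & H0 & _).
  rewrite <- (H0 y Hy). apply Hin; auto; lra.
Qed.

Lemma Psi_antitone u v y : vertex Sig u -> vertex Sig v -> le u v -> Psi v y -> Psi u y.
Proof.
  intros Hu Hv Huv Hy. destruct (classic (u = v)) as [->|Hne]; auto.
  apply Phi_sub_Psi; eauto.
Qed.

Lemma hmap_in_Psi s : Sig s ->
  forall a, in_simplex s a -> forall v, is_min le (support a) v -> Psi v (hmap a).
Proof.
  intros Hs; induction Hs as [s Hs IH] using face_ind; intros a Ha v [Hv Hvmin].
  assert (Hsv : s v) by (eapply support_sub; eauto).
  destruct (Hcontr v (vertex_of s v Hs Hsv)) as (Hp & Hin & _).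
  rewrite (hmap_step s a v Hs Ha (conj Hv Hvmin)).
  destruct (Rle_dec (1/2) (a v)) as [_|Hav]; auto.
  destruct (face_proj_in_face s a v Hs Ha Hsv ltac:(lra)) as [Hsf Hf].
  destruct (exists_least_support _ _ Hsf Hf) as [v1 Hv1].
  destruct (proj1 (support_face_proj a v v1 ltac:(lra)) (proj1 Hv1)) as [Hv1a Hv1v].
  assert (Hsv1 : s v1) by (eapply support_sub; eauto).
  apply Hin; [|unfold support in Hv; lra].
  apply Hlt with v1; eauto using vertex_of.
Qed.

Lemma hmap_in_Phi s a v : Sig s -> in_simplex s a -> is_min le s v -> a v = 0 ->
  Phi v (hmap a).
Proof.
  intros Hs Ha [Hv Hvmin] Hav. destruct (exists_least_support s a Hs Ha) as [v1 Hv1].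
  assert (Hsv1 : s v1) by (eapply support_sub; eauto; apply Hv1).
  apply Hlt with v1; eauto using vertex_of, hmap_in_Psi.
  intros ->. destruct Hv1 as [Hpos _]; unfold support in Hpos; lra.
Qed.

Lemma hmap_face_proj_in_Phi s a v : Sig s -> in_simplex s a -> is_min le s v -> a v < 1 ->
  Phi v (hmap (face_proj a v)).
Proof.
  intros Hs Ha Hv Hav. apply hmap_in_Phi with s; auto; [|apply face_proj_at].
  apply face_proj_in_simplex; auto; apply Hv.
Qed.

(* Unlike [hmap_step], v need not lie in the support of a: when a v = 0 the
   projection is the identity and the homotopy is taken at time 0. *)
Lemma hmap_min_vertex s a v : Sig s -> in_simplex s a -> is_min le s v ->
  hmap a = if Rle_dec (1/2) (a v) then p v else H v (hmap (face_proj a v)) (2 * a v).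
Proof.
  intros Hs Ha Hv. destruct (Rlt_dec 0 (a v)) as [Hpos|Hz].
  - apply hmap_step with s; auto. split; auto.
    intros w Hw; apply Hv; eapply support_sub; eauto.
  - assert (Hav : a v = 0) by (pose proof (proj1 Ha v); lra).
    destruct (Rle_dec (1/2) (a v)); [lra|].
    destruct (Hcontr v (vertex_of s v Hs (proj1 Hv))) as (_ & _ & H0 & _).
    rewrite face_proj_eq_self, Hav, Rmult_0_r by auto.
    symmetry; apply H0. apply hmap_in_Phi with s; auto.
Qed.

Lemma hmap_in_Psi_min s m a : Sig s -> is_min le s m -> in_simplex s a -> Psi m (hmap a).
Proof.
  intros Hs [Hm Hmmin] Ha. destruct (exists_least_support s a Hs Ha) as [v Hv].
  assert (Hsv : s v) by (eapply support_sub; eauto; apply Hv).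
  apply Psi_antitone with v; eauto using vertex_of, hmap_in_Psi.
Qed.

Lemma hmap_continuous_on_simplex s : Sig s ->
  forall a, in_simplex s a -> forall U, open TY U -> U (hmap a) ->
  exists eps, 0 < eps /\ forall b, in_simplex s b ->
    (forall v, s v -> Rabs (b v - a v) < eps) -> U (hmap b).
Proof.
  intros Hs; induction Hs as [s Hs IH] using face_ind; intros a Ha U HU Ua.
  destruct (exists_min_vertex s Hs) as [v Hv].
  assert (Hunfold := fun b Hb => hmap_min_vertex s b v Hs Hb Hv).
  destruct (Rlt_le_dec (1/2) (a v)) as [Hbig|Hsmall].
  - (* near the vertex v the map is constant *)
    exists (a v - 1/2); split; [lra|]. intros b Hb Hab.
    specialize (Hab v (proj1 Hv)); apply Rabs_def2 in Hab.
    rewrite Hunfold in Ua |- *; auto.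
    destruct (Rle_dec (1/2) (a v)); [|lra]. destruct (Rle_dec (1/2) (b v)); [exact Ua|lra].
  - set (y := hmap (face_proj a v)).
    assert (Hy : Phi v y) by (apply hmap_face_proj_in_Phi with s; auto; lra).
    destruct (Hcontr v (vertex_of s v Hs (proj1 Hv))) as (_ & _ & _ & H1 & Hcont).
    assert (Ut : U (H v y (2 * a v))).
    { rewrite Hunfold in Ua; auto. destruct (Rle_dec (1/2) (a v)); auto.
      replace (2 * a v) with 1 by lra. rewrite H1; auto. }
    pose proof (proj1 Ha v).
    destruct (Hcont U HU y (2 * a v) Hy ltac:(lra) Ut) as (W & eps1 & HW & Wy & Heps1 & HWU).
    destruct (face_proj_in_face s a v Hs Ha (proj1 Hv) ltac:(lra)) as [Hsf Haf].
    destruct (IH v (proj1 Hv) Hsf _ Haf W HW Wy) as (eps2 & Heps2 & Hnear).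
    exists (Rmin (eps1/2) (eps2/8)); split; [apply Rmin_pos; lra|]. intros b Hb Hab.
    pose proof (Rmin_l (eps1/2) (eps2/8)); pose proof (Rmin_r (eps1/2) (eps2/8)).
    assert (Habv := Hab v (proj1 Hv)); apply Rabs_def2 in Habv.
    pose proof (proj1 Hb v).
    rewrite Hunfold; auto. destruct (Rle_dec (1/2) (b v)).
    + rewrite <- (H1 y Hy). apply HWU; auto; [lra|]. rewrite Rabs_right; lra.
    + apply HWU; [apply hmap_face_proj_in_Phi with s; auto; lra| |lra|].
      * apply Hnear; [apply face_proj_in_face; auto; [apply Hv|lra]|].
        intros w Hw. eapply Rlt_le_trans.
        -- apply face_proj_close with s; eauto; [lra|apply Hv].
        -- lra.
      * replace (2 * b v - 2 * a v) with (2 * (b v - a v)) by ring.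
        rewrite Rabs_mult, (Rabs_right 2) by lra. specialize (Hab v (proj1 Hv)); lra.
Qed.

Lemma hmap_continuous : continuous_real Sig TY (fun x => hmap (proj1_sig x)).
Proof.
  intros U HU s Hs x Hx Ux.
  destruct (hmap_continuous_on_simplex s Hs (proj1_sig x) Hx U HU Ux) as (eps & Heps & Hnear).
  exists eps; auto.
Qed.

End Construction.

Theorem theorem3p1 (V : Type) (Sig : (V -> Prop) -> Prop) (le : V -> V -> Prop)
  (Y : Type) (TY : Topology Y) (Phi Psi : V -> Y -> Prop) :
  simplicial_complex Sig ->
  oriented Sig le ->
  (forall v, vertex Sig v -> exists y, Phi v y) ->
  (forall v, vertex Sig v -> exists y, Psi v y) ->
  (forall v, vertex Sig v -> forall y, Phi v y -> Psi v y) ->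
  (forall v, vertex Sig v -> contractible_in TY (Phi v) (Psi v)) ->
  (forall u v, vertex Sig u -> vertex Sig v -> le u v -> u <> v ->
     forall y, Psi v y -> Phi u y) ->
  exists h : realisation Sig -> Y,
    continuous_real Sig TY h /\
    forall s, Sig s -> forall m, is_min le s m ->
      forall a : realisation Sig, in_simplex s (proj1_sig a) -> Psi m (h a).
Proof.
  intros HSC HOR _ HPsi _ Hcontr Hlt.
  destruct (classic (inhabited Y)) as [[y0]|HY].
  - destruct (choice_on (vertex Sig)
      (fun v Hp => contraction TY (Phi v) (Psi v) (fst Hp) (snd Hp))
      (inhabits (fun y _ => y, y0))) as [Hp HHp].
    { intros v Hv. destruct (Hcontr v Hv) as (Hv' & pv & Hc). exists (Hv', pv); exact Hc. }
    exists (fun x => hmap le (fun v => fst (Hp v)) (fun v => snd (Hp v)) y0 (proj1_sig x)).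
    split.
    + apply hmap_continuous with Phi Psi; auto.
    + intros s Hs m Hm x Hx. apply hmap_in_Psi_min with Sig TY Phi s; auto.
  - assert (Hempty : realisation Sig -> False).
    { intros [a [s [Hs _]]]. destruct (proj2 (proj1 HSC s Hs)) as [v Hv].
      destruct (HPsi v (vertex_of Sig s v Hs Hv)) as [y _]. exact (HY (inhabits y)). }
    exists (fun x => False_rect Y (Hempty x)).
    split; [intros U _ s _ x|intros s _ m _ x]; destruct (Hempty x).
Qed.
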